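(* Fix $\gamma\in(2/3,1)$. For $N>0$ let $w_N=(N,N)$, $M=N-\sqrt2N^\gamma$, $K=[2\sqrt2N^{1+\gamma}]+1$, $z_j=(jM/K,\,jM/K+\sqrt2N^\gamma)$ for $0\le j\le K$, $\mathcal{C}=\{z_j\}_{j=0}^K$, and let $\mathcal{C}'$ be the image of $\mathcal{C}$ under $T_N(x,y)=(N-x,N-y)$. Then for all sufficiently large $N$ and every $z\in\mathcal{C}\cup\mathcal{C}'$, $$\sqrt{a(0,z)}+\sqrt{a(z,w_N)}-\sqrt{a(0,w_N)}\le -N^{2\gamma-1}.$$
   Context: $a(w,w')$ denotes the area of the axis-parallel rectangle with corners $w$ and $w'$. $[x]$ is the integer part. *)

From Stdlib Require Import Reals Lra Lia ZArith.
Open Scope R_scope.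

Definition area (w w' : R * R) : R :=
  Rabs (fst w' - fst w) * Rabs (snd w' - snd w).

Definition origin : R * R := (0, 0).
Definition wN (N : R) : R * R := (N, N).

Definition shiftN (g N : R) : R := sqrt 2 * Rpower N g.
Definition MN (g N : R) : R := N - shiftN g N.
(* K = [2 sqrt 2 N^(1+gamma)] + 1  ([x] = integer part = floor) *)
Definition KN (g N : R) : nat :=
  (Z.to_nat (Int_part (2 * sqrt 2 * Rpower N (1 + g))) + 1)%nat.

Definition zj (g N : R) (j : nat) : R * R :=
  (INR j * MN g N / INR (KN g N),
   INR j * MN g N / INR (KN g N) + shiftN g N).

Definition TN (N : R) (p : R * R) : R * R := (N - fst p, N - snd p).

Definition inC (g N : R) (p : R * R) : Prop :=
  exists j : nat, (j <= KN g N)%nat /\ p = zj g N j.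

Definition inC' (g N : R) (p : R * R) : Prop :=
  exists q, inC g N q /\ p = TN N q.

(* Every point of C has the form z = (x, x + s) with s = sqrt 2 N^gamma and
   0 <= x <= N - s, and T_N preserves the left-hand side.  Centring at
   A = x + s/2, B = N - x - s/2 (so A + B = N) turns the two areas into
   A^2 - s^2/4 and B^2 - s^2/4; the tangent bound sqrt (A^2 - c) <= A - c/(2A)
   together with 1/A + 1/B >= 4/(A + B) gives a deficit of at least
   s^2/(2N) = N^(2 gamma - 1). *)

From Stdlib Require Import Reals Lra.
Open Scope R_scope.

Lemma sqrt_sqr_sub_le (A c : R) : 0 < A -> c <= 2 * (A * A) ->
  sqrt (A * A - c) <= A - c / (2 * A).
Proof.
  intros hA hc.
  assert (hnonneg : 0 <= A - c / (2 * A)).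
  { assert (c / (2 * A) <= A).
    { apply Rmult_le_reg_r with (2 * A); [lra|].
      unfold Rdiv; rewrite Rmult_assoc, Rinv_l by lra. nra. }
    lra. }
  rewrite <- (sqrt_square (A - c / (2 * A))) by exact hnonneg.
  apply sqrt_le_1_alt.
  replace ((A - c / (2 * A)) * (A - c / (2 * A)))
    with (A * A - c + (c / (2 * A)) * (c / (2 * A))) by (field; lra).
  pose proof (Rle_0_sqr (c / (2 * A))). unfold Rsqr in *. lra.
Qed.

Lemma Rinv_add_Rinv_ge (A B : R) : 0 < A -> 0 < B -> 4 / (A + B) <= / A + / B.
Proof.
  intros hA hB.
  replace (/ A + / B) with (4 / (A + B) + (A - B) * (A - B) / (A * B * (A + B)))
    by (field; lra).
  assert (0 <= (A - B) * (A - B) / (A * B * (A + B))).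
  { apply Rmult_le_pos; [apply Rle_0_sqr|].
    apply Rlt_le, Rinv_0_lt_compat, Rmult_lt_0_compat; [apply Rmult_lt_0_compat|]; lra. }
  lra.
Qed.

Lemma sqrt_shifted_products_le (N s x : R) : 0 < s -> 0 <= x -> x + s <= N ->
  sqrt (x * (x + s)) + sqrt ((N - x) * (N - (x + s))) <= N - s * s / (2 * N).
Proof.
  intros hs hx hxN.
  set (A := x + s / 2). set (B := N - x - s / 2). set (c := s * s / 4).
  assert (hA : 0 < A) by (unfold A; lra).
  assert (hB : 0 < B) by (unfold B; lra).
  replace (x * (x + s)) with (A * A - c) by (unfold A, c; field).
  replace ((N - x) * (N - (x + s))) with (B * B - c) by (unfold B, c; field).
  assert (hcA : c <= 2 * (A * A)) by (unfold c, A; nra).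
  assert (hcB : c <= 2 * (B * B)) by (unfold c, B; nra).
  pose proof (sqrt_sqr_sub_le A c hA hcA) as hsqrtA.
  pose proof (sqrt_sqr_sub_le B c hB hcB) as hsqrtB.
  assert (hN : N = A + B) by (unfold A, B; field).
  assert (hdeficit : s * s / (2 * N) <= c / (2 * A) + c / (2 * B)).
  { pose proof (Rinv_add_Rinv_ge A B hA hB) as hinv.
    assert (hc : 0 <= c / 2) by (unfold c; nra).
    replace (s * s / (2 * N)) with (c / 2 * (4 / (A + B)))
      by (rewrite hN; unfold c; field; lra).
    replace (c / (2 * A) + c / (2 * B)) with (c / 2 * (/ A + / B)) by (field; lra).
    now apply Rmult_le_compat_l. }
  lra.
Qed.

Lemma area_origin_TN (N : R) (p : R * R) : area origin (TN N p) = area p (wN N).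
Proof. unfold area, origin, TN, wN; simpl. now rewrite !Rminus_0_r. Qed.

Lemma area_TN_wN (N : R) (p : R * R) : area (TN N p) (wN N) = area origin p.
Proof.
  unfold area, origin, TN, wN; simpl.
  replace (N - (N - fst p)) with (fst p - 0) by ring.
  now replace (N - (N - snd p)) with (snd p - 0) by ring.
Qed.

Lemma deficit_on_shifted_diagonal (N s x : R) : 0 < s -> 0 <= x -> x + s <= N ->
  sqrt (area origin (x, x + s)) + sqrt (area (x, x + s) (wN N))
    - sqrt (area origin (wN N)) <= - (s * s / (2 * N)).
Proof.
  intros hs hx hxN.
  unfold area, origin, wN; simpl. rewrite !Rminus_0_r.
  rewrite (Rabs_pos_eq x), (Rabs_pos_eq (x + s)), (Rabs_pos_eq (N - x)),
    (Rabs_pos_eq (N - (x + s))), Rabs_pos_eq, sqrt_square by lra.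
  pose proof (sqrt_shifted_products_le N s x hs hx hxN). lra.
Qed.

Lemma shiftN_pos (g N : R) : 0 < shiftN g N.
Proof.
  apply Rmult_lt_0_compat; [apply sqrt_lt_R0; lra | apply exp_pos].
Qed.

Lemma shiftN_le (g N : R) : g < 1 -> Rpower 2 (/ (1 - g)) <= N -> shiftN g N <= N.
Proof.
  intros hg hN.
  assert (h2 : 2 <= Rpower N (1 - g)).
  { replace 2 with (Rpower (Rpower 2 (/ (1 - g))) (1 - g)).
    - apply Rle_Rpower_l; [lra | split; [apply exp_pos | exact hN]].
    - rewrite Rpower_mult. replace (/ (1 - g) * (1 - g)) with 1 by (field; lra).
      apply Rpower_1; lra. }
  assert (hsplit : N = Rpower N g * Rpower N (1 - g)).
  { assert (0 < N)
      by (apply Rlt_le_trans with (Rpower 2 (/ (1 - g))); [apply exp_pos | exact hN]).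
    rewrite <- Rpower_plus. replace (g + (1 - g)) with 1 by ring. now rewrite Rpower_1. }
  assert (sqrt 2 <= 2).
  { pose proof (sqrt_sqrt 2 ltac:(lra)). pose proof (sqrt_pos 2). nra. }
  pose proof (exp_pos (g * ln N)).
  unfold shiftN, Rpower in *. rewrite hsplit at 2. nra.
Qed.

Lemma shiftN_sqr_div (g N : R) : 0 < N ->
  shiftN g N * shiftN g N / (2 * N) = Rpower N (2 * g - 1).
Proof.
  intros hN. unfold shiftN.
  replace (sqrt 2 * Rpower N g * (sqrt 2 * Rpower N g))
    with ((sqrt 2 * sqrt 2) * (Rpower N g * Rpower N g)) by ring.
  rewrite sqrt_sqrt by lra. rewrite <- Rpower_plus.
  replace (g + g) with ((2 * g - 1) + 1) by ring.
  rewrite Rpower_plus, Rpower_1 by lra. field. lra.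
Qed.

Lemma zj_fst_bounds (g N : R) (j : nat) : (j <= KN g N)%nat -> 0 <= MN g N ->
  0 <= fst (zj g N j) <= MN g N.
Proof.
  intros hj hM. simpl.
  assert (hK : 1 <= INR (KN g N)).
  { unfold KN. rewrite plus_INR. simpl.
    pose proof (pos_INR (Z.to_nat (Int_part (2 * sqrt 2 * Rpower N (1 + g))))). lra. }
  assert (hjK : INR j <= INR (KN g N)) by now apply le_INR.
  pose proof (pos_INR j).
  split.
  - apply Rmult_le_pos; [apply Rmult_le_pos; lra | left; apply Rinv_0_lt_compat; lra].
  - apply Rmult_le_reg_r with (INR (KN g N)); [lra|].
    unfold Rdiv. rewrite Rmult_assoc, Rinv_l by lra. nra.
Qed.

Theorem lemma3p2 (g : R) (hg : 2 / 3 < g < 1) :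
  exists N0 : R, forall N : R, N0 <= N -> 0 < N ->
    forall z : R * R, inC g N z \/ inC' g N z ->
      sqrt (area origin z) + sqrt (area z (wN N)) - sqrt (area origin (wN N))
        <= - Rpower N (2 * g - 1).
Proof.
  exists (Rpower 2 (/ (1 - g))).
  intros N hN0 hN z hz.
  pose proof (shiftN_pos g N) as hs.
  pose proof (shiftN_le g N (proj2 hg) hN0) as hsN.
  rewrite <- (shiftN_sqr_div g N hN).
  assert (hC : forall j, (j <= KN g N)%nat ->
    sqrt (area origin (zj g N j)) + sqrt (area (zj g N j) (wN N))
      - sqrt (area origin (wN N)) <= - (shiftN g N * shiftN g N / (2 * N))).
  { intros j hj.
    assert (hM : 0 <= MN g N) by (unfold MN; lra).
    destruct (zj_fst_bounds g N j hj hM) as [hx0 hxM].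
    apply deficit_on_shifted_diagonal; simpl in *; unfold MN in *; lra. }
  destruct hz as [[j [hj ->]] | [q [[j [hj ->]] ->]]].
  - now apply hC.
  - rewrite area_origin_TN, area_TN_wN, (Rplus_comm (sqrt (area (zj g N j) (wN N)))).
    now apply hC.
Qed.
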